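(* Let $(A,\cdot,[-,-],\varepsilon)$ be a Leibniz-Poisson color algebra. Then $(A,\cdot,\{-,-,-\},\varepsilon)$ is a ternary Leibniz-Poisson color algebra, where $\{x,y,z\}:=[x,y\cdot z]$ for all $x,y,z\in\mathcal{H}(A)$.
   Context: $G$ is an abelian group, $\mathbb{K}$ a field of characteristic $\neq 2$, $\mathcal{H}(V)$ the homogeneous elements of a $G$-graded space $V$; even maps preserve degree. A skew-symmetric bicharacter $\varepsilon:G\times G\to\mathbb{K}^*$ satisfies $\varepsilon(a,b)\varepsilon(b,a)=1$, $\varepsilon(a,b+c)=\varepsilon(a,b)\varepsilon(a,c)$, $\varepsilon(a+b,c)=\varepsilon(a,c)\varepsilon(b,c)$; $\varepsilon(x,y)$ means $\varepsilon$ of the degrees. A Leibniz-Poisson color algebra $(P,\cdot,[-,-],\varepsilon)$ is a $G$-graded space with even bilinear maps $\cdot$ and $[-,-]$ such that $(P,\cdot)$ is associative, $[[x,y],z]=[x,[y,z]]+\varepsilon(y,z)[[x,z],y]$, and $[x\cdot y,z]=x\cdot[y,z]+\varepsilon(y,z)[x,z]\cdot y$ for all homogeneous $x,y,z$. A ternary Leibniz-Poisson color algebra $(A,\cdot,[-,-,-],\varepsilon)$ is a $G$-graded space with an even associative product $\cdot$ and an even trilinear $[-,-,-]$ such that $[[x,y,z],t,u]=[x,y,[z,t,u]]+\varepsilon(z,t+u)[x,[y,t,u],z]+\varepsilon(y+z,t+u)[[x,t,u],y,z]$ and $[x\cdot y,z,t]=x\cdot[y,z,t]+\varepsilon(y,z+t)[x,z,t]\cdot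 y$ for all homogeneous $x,y,z,t,u$. *)

From HB Require Import structures.
From mathcomp Require Import all_boot all_order all_algebra.
Set Implicit Arguments. Unset Strict Implicit. Unset Printing Implicit Defensive.
Import GRing.Theory.
Local Open Scope ring_scope.

Section Defs.
Variables (K : fieldType) (G : zmodType) (V : lmodType K).

(* A G-grading of V: hom g v means "v is homogeneous of degree g", i.e. v \in V_g.
   Each V_g is a subspace and V is the direct sum of the V_g. *)
Definition is_grading (hom : G -> V -> Prop) : Prop :=
  [/\ (forall g, hom g 0),
      (forall g (k : K) v w, hom g v -> hom g w -> hom g (k *: v + w)),
      (forall v, exists (s : seq G) (f : G -> V),
          [/\ uniq s, (forall g, hom g (f g)) & v = \sum_(g <- s) f g]) &
      (forall (s : seq G) (f : G -> V), uniq s -> (forall g, hom g (f g)) ->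
          \sum_(g <- s) f g = 0 -> forall g, g \in s -> f g = 0)].

Definition skew_bichar (eps : G -> G -> K) : Prop :=
  [/\ (forall a b, eps a b * eps b a = 1),
      (forall a b c, eps a (b + c) = eps a b * eps a c) &
      (forall a b c, eps (a + b) c = eps a c * eps b c)].

Definition bilinear_map (m : V -> V -> V) : Prop :=
  (forall (k : K) x y z, m (k *: x + y) z = k *: m x z + m y z) /\
  (forall (k : K) x y z, m x (k *: y + z) = k *: m x y + m x z).

Definition trilinear_map (m : V -> V -> V -> V) : Prop :=
  [/\ (forall (k : K) x x' y z, m (k *: x + x') y z = k *: m x y z + m x' y z),
      (forall (k : K) x y y' z, m x (k *: y + y') z = k *: m x y z + m x y' z) &
      (forall (k : K) x y z z', m x y (k *: z + z') = k *: m x y z + m x y z')].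

Definition even2 (hom : G -> V -> Prop) (m : V -> V -> V) : Prop :=
  forall a b x y, hom a x -> hom b y -> hom (a + b) (m x y).

Definition even3 (hom : G -> V -> Prop) (m : V -> V -> V -> V) : Prop :=
  forall a b c x y z, hom a x -> hom b y -> hom c z -> hom (a + b + c) (m x y z).

Definition associative_map (m : V -> V -> V) : Prop :=
  forall x y z, m (m x y) z = m x (m y z).

Definition LeibnizPoissonColor (hom : G -> V -> Prop) (eps : G -> G -> K)
    (mul br : V -> V -> V) : Prop :=
  [/\ bilinear_map mul /\ even2 hom mul, bilinear_map br /\ even2 hom br,
      associative_map mul,
      (forall a b c x y z, hom a x -> hom b y -> hom c z ->
         br (br x y) z = br x (br y z) + eps b c *: br (br x z) y) &
      (forall a b c x y z, hom a x -> hom b y -> hom c z ->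
         br (mul x y) z = mul x (br y z) + eps b c *: mul (br x z) y)].

Definition TernaryLeibnizPoissonColor (hom : G -> V -> Prop) (eps : G -> G -> K)
    (mul : V -> V -> V) (tb : V -> V -> V -> V) : Prop :=
  [/\ bilinear_map mul /\ even2 hom mul, trilinear_map tb /\ even3 hom tb,
      associative_map mul,
      (forall a b c d e x y z t u,
         hom a x -> hom b y -> hom c z -> hom d t -> hom e u ->
         tb (tb x y z) t u = tb x y (tb z t u)
                             + eps c (d + e) *: tb x (tb y t u) z
                             + eps (b + c) (d + e) *: tb (tb x t u) y z) &
      (forall a b c d x y z t,
         hom a x -> hom b y -> hom c z -> hom d t ->
         tb (mul x y) z t = mul x (tb y z t) + eps b (c + d) *: mul (tb x z t) y)].

End Defs.

(* Every axiom of the ternary structure for [{x,y,z} := [x, y z]] is one axiom of the binary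
   structure applied to the homogeneous pair [y z]: the ternary Leibniz rule is the Leibniz rule,
   and the ternary Leibniz identity is the Leibniz identity for [x, y z, t u] followed by the
   Leibniz rule expanding [[y z, t u]]. *)
From HB Require Import structures.
From mathcomp Require Import all_boot all_order all_algebra.
Import GRing.Theory.
Local Open Scope ring_scope.

Section BracketOfProduct.
Variables (K : fieldType) (G : zmodType) (V : lmodType K).
Variables (hom : G -> V -> Prop) (eps : G -> G -> K) (mul br : V -> V -> V).

Definition br_mul (x y z : V) : V := br x (mul y z).

Lemma bilinear_mapDr (m : V -> V -> V) : bilinear_map m ->
  forall x y z (k : K), m x (y + k *: z) = m x y + k *: m x z.
Proof. by move=> [_ linr] x y z k; rewrite addrC linr addrC. Qed.

Lemma br_mul_trilinear : bilinear_map mul -> bilinear_map br -> trilinear_map br_mul.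
Proof.
move=> [mull mulr] [brl brr]; split=> k x *; rewrite /br_mul.
- exact: brl.
- by rewrite mull brr.
- by rewrite mulr brr.
Qed.

Lemma br_mul_even3 : even2 hom mul -> even2 hom br -> even3 hom br_mul.
Proof.
move=> mulE brE a b c x y z hx hy hz; rewrite -addrA.
exact: brE hx (mulE _ _ _ _ hy hz).
Qed.

Hypothesis mulE : even2 hom mul.

Hypothesis leibniz_rule : forall a b c x y z, hom a x -> hom b y -> hom c z ->
  br (mul x y) z = mul x (br y z) + eps b c *: mul (br x z) y.

Lemma br_mul_leibniz_rule a b c d x y z t :
  hom a x -> hom b y -> hom c z -> hom d t ->
  br_mul (mul x y) z t = mul x (br_mul y z t) + eps b (c + d) *: mul (br_mul x z t) y.
Proof. by move=> hx hy hz ht; exact: leibniz_rule hx hy (mulE _ _ _ _ hz ht). Qed.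

Hypothesis br_bilinear : bilinear_map br.

Hypothesis leibniz_identity : forall a b c x y z, hom a x -> hom b y -> hom c z ->
  br (br x y) z = br x (br y z) + eps b c *: br (br x z) y.

Lemma br_mul_leibniz_identity a b c d e x y z t u :
  hom a x -> hom b y -> hom c z -> hom d t -> hom e u ->
  br_mul (br_mul x y z) t u = br_mul x y (br_mul z t u)
    + eps c (d + e) *: br_mul x (br_mul y t u) z
    + eps (b + c) (d + e) *: br_mul (br_mul x t u) y z.
Proof.
move=> hx hy hz ht hu; rewrite /br_mul.
have htu := mulE _ _ _ _ ht hu.
rewrite (leibniz_identity _ _ _ _ _ _ hx (mulE _ _ _ _ hy hz) htu).
by rewrite (leibniz_rule _ _ _ _ _ _ hy hz htu) (@bilinear_mapDr br br_bilinear).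
Qed.

End BracketOfProduct.

Theorem mainTheorem18 (K : fieldType) (G : zmodType) (V : lmodType K)
    (hom : G -> V -> Prop) (eps : G -> G -> K) (mul br : V -> V -> V) :
  (2%:R : K) != 0 ->
  is_grading hom -> skew_bichar eps ->
  LeibnizPoissonColor hom eps mul br ->
  TernaryLeibnizPoissonColor hom eps mul (fun x y z => br x (mul y z)).
Proof.
move=> _ _ _ [[mulL mulE] [brL brE] assoc lid lrule].
split=> //.
- by split; [exact: br_mul_trilinear | exact: br_mul_even3].
- exact: br_mul_leibniz_identity.
- exact: br_mul_leibniz_rule.
Qed.
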